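(* Every universal distance matrix is weakly universal. There exist weakly universal distance matrices which are not universal.
   Context: $\mathcal R$ is the set of infinite real matrices $r=\{r_{i,j}\}_{i,j\ge1}$ with $r_{i,i}=0$, $r_{i,j}\ge0$, $r_{i,j}=r_{j,i}$, $r_{i,k}+r_{k,j}\ge r_{i,j}$; $\mathcal R_n$ is the analogous set of $n\times n$ matrices (with the usual topology of $\mathbb R^{n^2}$), and $p_n(r)$ is the upper-left $n\times n$ corner. $r$ is proper if $r_{i,j}>0$ for $i\neq j$. For $q\in\mathcal R_n$, $A(q)=\{a\in\mathbb R^n:|a_i-a_j|\le q_{i,j}\le a_i+a_j\ \forall i,j\}$. A proper $r\in\mathcal R$ is universal if for every $n$, every $a\in A(p_n(r))$ and every $\epsilon>0$ there is $m\in\mathbb N$ with $\max_{1\le i\le n}|r_{i,m}-a_i|<\epsilon$. A proper $r\in\mathcal R$ is weakly universal if for every $n$ the set of all submatrices $\{r_{i_k,i_s}\}_{k,s=1}^n$, over all $n$-tuples of (distinct) indices $i_1,\dots,i_n\in\mathbb N$, is dense in $\mathcal R_n$. *)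

(* concrete classical reals R. Indices are 0-based
   (index i here corresponds to index i+1 in the paper). *)
From Stdlib Require Import Reals.
Open Scope R_scope.

Definition mat := nat -> nat -> R.

Definition in_calR (r : mat) : Prop :=
  (forall i, r i i = 0) /\
  (forall i j, 0 <= r i j) /\
  (forall i j, r i j = r j i) /\
  (forall i j k, r i j <= r i k + r k j).

Definition in_calR_n (n : nat) (q : mat) : Prop :=
  (forall i, (i < n)%nat -> q i i = 0) /\
  (forall i j, (i < n)%nat -> (j < n)%nat -> 0 <= q i j) /\
  (forall i j, (i < n)%nat -> (j < n)%nat -> q i j = q j i) /\
  (forall i j k, (i < n)%nat -> (j < n)%nat -> (k < n)%nat ->
     q i j <= q i k + q k j).

Definition proper (r : mat) : Prop := forall i j, i <> j -> 0 < r i j.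

Definition in_A (n : nat) (r : mat) (a : nat -> R) : Prop :=
  forall i j, (i < n)%nat -> (j < n)%nat ->
    Rabs (a i - a j) <= r i j /\ r i j <= a i + a j.

Definition universal (r : mat) : Prop :=
  in_calR r /\ proper r /\
  forall (n : nat) (a : nat -> R), in_A n r a ->
  forall eps, 0 < eps ->
  exists m : nat, forall i, (i < n)%nat -> Rabs (r i m - a i) < eps.

(* Density, in \mathcal R_n with the topology of R^{n^2}, of the set of
   submatrices {r_{i_k,i_s}}_{k,s<n} over tuples of distinct indices. *)
Definition weakly_universal (r : mat) : Prop :=
  in_calR r /\ proper r /\
  forall (n : nat) (q : mat), in_calR_n n q ->
  forall eps, 0 < eps ->
  exists idx : nat -> nat,
    (forall k s, (k < n)%nat -> (s < n)%nat -> idx k = idx s -> k = s) /\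
    (forall k s, (k < n)%nat -> (s < n)%nat ->
       Rabs (r (idx k) (idx s) - q k s) < eps).

From Stdlib Require Import Reals Lra Lia Arith ZArith List ClassicalDescription.
From Stdlib Require Cantor.
From mathcomp Require Import (canonicals) choice.
Open Scope R_scope.

(* Universal implies weakly universal: a finite pseudometric [q] is realized in [r]
   one point at a time.  If [x_0, ..., x_k] approximately realize [q] on its first
   [k + 1] points, the McShane extension of the distances [q_(j, k+1)] is, up to a
   small slack, a vector of [A(p_N(r))], so universality yields a point [x_(k+1)] at
   the prescribed distances.  Moving the off-diagonal entries of [q] slightly away
   from [0] beforehand forces the chosen indices to be distinct.

   Conversely, glue, at mutual distances exceeding their diameters, countably many
   blocks realizing every finite metric with rational values: this matrix is weakly
   universal.  Prepending a point at distance at least [1] from all others keeps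
   weak universality but destroys universality, since [a = (1/2)] lies in [A(p_1)]
   and is approximated by no column. *)

Fixpoint min_upto (g : nat -> R) (k : nat) : R :=
  match k with
  | O => g O
  | S k' => Rmin (min_upto g k') (g k)
  end.

Lemma min_upto_le (g : nat -> R) (k j : nat) : (j <= k)%nat -> min_upto g k <= g j.
Proof.
  induction k as [|k IHk]; intros Hj; simpl.
  - replace j with O by lia; lra.
  - destruct (Nat.eq_dec j (S k)) as [->|Hne].
    + apply Rmin_r.
    + eapply Rle_trans; [apply Rmin_l | apply IHk; lia].
Qed.

Lemma min_upto_attained (g : nat -> R) (k : nat) :
  exists j, (j <= k)%nat /\ min_upto g k = g j.
Proof.
  induction k as [|k [j [Hj E]]]; simpl.
  - exists O; split; reflexivity.
  - unfold Rmin; destruct (Rle_dec (min_upto g k) (g (S k))).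
    + exists j; split; [lia | exact E].
    + exists (S k); split; reflexivity.
Qed.

Lemma nat_bound_upto (f : nat -> nat) (n : nat) :
  exists N, forall j, (j < n)%nat -> (f j < N)%nat.
Proof.
  induction n as [|n [N HN]].
  - exists O; intros j Hj; lia.
  - exists (Nat.max N (S (f n))); intros j Hj.
    destruct (Nat.eq_dec j n) as [->|Hne]; [lia|].
    specialize (HN j ltac:(lia)); lia.
Qed.

Lemma in_calR_n_S (n : nat) (q : mat) : in_calR_n (S n) q -> in_calR_n n q.
Proof.
  intros [Qd [Qn [Qs Qt]]]; repeat split; intros; auto.
Qed.

Section Universal.

Variable r : mat.
Hypothesis r_universal : universal r.

Let r_diag : forall i, r i i = 0 := proj1 (proj1 r_universal).
Let r_sym : forall i j, r i j = r j i := proj1 (proj2 (proj2 (proj1 r_universal))).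
Let r_triangle : forall i j k, r i j <= r i k + r k j :=
  proj2 (proj2 (proj2 (proj1 r_universal))).

(* The witness vector is the McShane extension
   [a_i = e + min_(j <= k) (d_j + r_(i, x_j))] of the prescribed distances [d]. *)
Lemma universal_extend (k : nat) (x : nat -> nat) (d : nat -> R) (e : R) :
  0 < e ->
  (forall u v, (u <= k)%nat -> (v <= k)%nat -> r (x u) (x v) <= d u + d v + e) ->
  (forall u v, (u <= k)%nat -> (v <= k)%nat -> d u <= d v + r (x u) (x v) + e) ->
  exists m, forall u, (u <= k)%nat -> Rabs (r (x u) m - d u) < 2 * e.
Proof.
  intros He Hsum Hlip.
  set (g i j := d j + r i (x j)).
  set (a i := min_upto (g i) k + e).
  destruct (nat_bound_upto x (S k)) as [N HN].
  assert (Ha : in_A N r a).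
  { intros i j _ _.
    destruct (min_upto_attained (g i) k) as [u [Hu Eu]].
    destruct (min_upto_attained (g j) k) as [v [Hv Ev]].
    pose proof (min_upto_le (g i) k v Hv).
    pose proof (min_upto_le (g j) k u Hu).
    unfold a, g in *; split.
    - pose proof (r_triangle i (x v) j); pose proof (r_triangle j (x u) i).
      rewrite (r_sym j i) in *; apply Rabs_le; lra.
    - pose proof (Hsum u v Hu Hv).
      pose proof (r_triangle i j (x u)); pose proof (r_triangle (x u) j (x v)).
      rewrite (r_sym (x v) j) in *; lra. }
  destruct (proj2 (proj2 r_universal) N a Ha e He) as [m Hm].
  exists m; intros u Hu.
  pose proof (Rabs_def2 _ _ (Hm (x u) (HN u ltac:(lia)))) as Hmu.
  destruct (min_upto_attained (g (x u)) k) as [v [Hv Ev]].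
  pose proof (min_upto_le (g (x u)) k u Hu).
  pose proof (Hlip u v Hu Hv).
  unfold a, g in *; rewrite r_diag in *; apply Rabs_def1; lra.
Qed.

Lemma universal_realizes (n : nat) (q : mat) : in_calR_n n q ->
  forall eta, 0 < eta -> exists x : nat -> nat,
    forall a b, (a < n)%nat -> (b < n)%nat -> Rabs (r (x a) (x b) - q a b) < eta.
Proof.
  induction n as [|n IHn]; intros Hq eta Heta.
  { exists (fun i => i); intros; lia. }
  pose proof Hq as [Qd [Qn [Qs Qt]]].
  destruct n as [|k].
  { exists (fun _ => O); intros a b Ha Hb.
    replace a with O by lia; replace b with O by lia.
    rewrite r_diag, Qd by lia; rewrite Rminus_0_r, Rabs_R0; exact Heta. }
  destruct (IHn (in_calR_n_S _ _ Hq) (eta / 2) ltac:(lra)) as [x Hx].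
  destruct (universal_extend k x (fun j => q j (S k)) (eta / 2) ltac:(lra)) as [m Hm].
  - intros u v Hu Hv.
    pose proof (Rabs_def2 _ _ (Hx u v ltac:(lia) ltac:(lia))).
    pose proof (Qt u v (S k) ltac:(lia) ltac:(lia) ltac:(lia)).
    rewrite (Qs (S k) v) in * by lia; lra.
  - intros u v Hu Hv.
    pose proof (Rabs_def2 _ _ (Hx u v ltac:(lia) ltac:(lia))).
    pose proof (Qt u (S k) v ltac:(lia) ltac:(lia) ltac:(lia)); lra.
  - exists (fun j => if Nat.eq_dec j (S k) then m else x j); intros a b Ha Hb.
    destruct (Nat.eq_dec a (S k)) as [->|Ha'], (Nat.eq_dec b (S k)) as [->|Hb'].
    + rewrite r_diag, Qd by lia; rewrite Rminus_0_r, Rabs_R0; exact Heta.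
    + rewrite r_sym, Qs by lia.
      replace eta with (2 * (eta / 2)) by field; apply Hm; lia.
    + replace eta with (2 * (eta / 2)) by field; apply Hm; lia.
    + pose proof (Hx a b ltac:(lia) ltac:(lia)); lra.
Qed.

Definition separate (delta : R) (q : mat) : mat :=
  fun k s => if Nat.eq_dec k s then 0 else q k s + delta.

Lemma separate_calR_n (n : nat) (delta : R) (q : mat) :
  0 <= delta -> in_calR_n n q -> in_calR_n n (separate delta q).
Proof.
  intros Hd [Qd [Qn [Qs Qt]]]; unfold separate; repeat split.
  - intros i _; destruct (Nat.eq_dec i i); [reflexivity | congruence].
  - intros i j Hi Hj; destruct (Nat.eq_dec i j); [lra|].
    pose proof (Qn i j Hi Hj); lra.
  - intros i j Hi Hj; rewrite Qs by assumption.
    destruct (Nat.eq_dec i j), (Nat.eq_dec j i); congruence.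
  - intros i j k Hi Hj Hk.
    pose proof (Qt i j k Hi Hj Hk); pose proof (Qn i k Hi Hk); pose proof (Qn k j Hk Hj).
    destruct (Nat.eq_dec i j), (Nat.eq_dec i k), (Nat.eq_dec k j); subst; try congruence; lra.
Qed.

Lemma universal_weakly_universal : weakly_universal r.
Proof.
  pose proof r_universal as [Hr [Hp _]]; split; [exact Hr | split; [exact Hp|]].
  intros n q Hq eps Heps.
  pose proof Hq as [Qd [Qn _]].
  destruct (universal_realizes n (separate (eps / 2) q)
              (separate_calR_n n (eps / 2) q ltac:(lra) Hq) (eps / 2) ltac:(lra)) as [x Hx].
  exists x; split.
  - intros k s Hk Hs E; destruct (Nat.eq_dec k s) as [|Hne]; [assumption | exfalso].
    pose proof (Rabs_def2 _ _ (Hx k s Hk Hs)) as H.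
    rewrite E, r_diag in H; unfold separate in H.
    destruct (Nat.eq_dec k s); [congruence|].
    pose proof (Qn k s Hk Hs); lra.
  - intros k s Hk Hs.
    pose proof (Rabs_def2 _ _ (Hx k s Hk Hs)) as H; unfold separate in H.
    apply Rabs_def1; destruct (Nat.eq_dec k s) as [->|]; try rewrite Qd in * by lia; lra.
Qed.

End Universal.

Definition prepend_point (r : mat) : mat := fun i j =>
  match i, j with
  | O, O => 0
  | O, S j' => 1 + r O j'
  | S i', O => 1 + r O i'
  | S i', S j' => r i' j'
  end.

Lemma prepend_point_calR (r : mat) : in_calR r -> in_calR (prepend_point r).
Proof.
  intros [Rd [Rn [Rs Rt]]]; repeat split.
  - intros [|i]; simpl; auto.
  - intros [|i] [|j]; simpl; try lra; auto.
    + pose proof (Rn O j); lra.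
    + pose proof (Rn O i); lra.
  - intros [|i] [|j]; reflexivity || apply Rs.
  - intros [|i] [|j] [|k]; simpl.
    + lra.
    + pose proof (Rn O k); lra.
    + lra.
    + pose proof (Rt O j k); lra.
    + lra.
    + pose proof (Rt O i k); rewrite (Rs k i) in *; lra.
    + pose proof (Rt i j O); pose proof (Rs i O); lra.
    + apply Rt.
Qed.

Lemma prepend_point_proper (r : mat) : in_calR r -> proper r -> proper (prepend_point r).
Proof.
  intros [_ [Rn _]] Hp [|i] [|j] Hij; simpl; try congruence.
  - pose proof (Rn O j); lra.
  - pose proof (Rn O i); lra.
  - apply Hp; congruence.
Qed.

Lemma prepend_point_not_universal (r : mat) : in_calR r -> ~ universal (prepend_point r).
Proof.
  intros [_ [Rn _]] [_ [_ U]].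
  assert (Ha : in_A 1 (prepend_point r) (fun _ => / 2)).
  { intros i j Hi Hj; replace i with O by lia; replace j with O by lia; simpl.
    rewrite Rminus_diag, Rabs_R0; lra. }
  destruct (U 1%nat _ Ha (/ 2) ltac:(lra)) as [[|m] Hm];
    specialize (Hm O ltac:(lia)); apply Rabs_def2 in Hm; simpl in Hm.
  - lra.
  - pose proof (Rn O m); lra.
Qed.

Lemma prepend_point_weakly_universal (r : mat) :
  weakly_universal r -> weakly_universal (prepend_point r).
Proof.
  intros [Hr [Hp W]]; split; [|split].
  - exact (prepend_point_calR r Hr).
  - exact (prepend_point_proper r Hr Hp).
  - intros n q Hq eps Heps; destruct (W n q Hq eps Heps) as [x [Hinj Happ]].
    exists (fun k => S (x k)); split.
    + intros k s Hk Hs E; apply Hinj; congruence.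
    + exact Happ.
Qed.

Definition pad (w : mat) (n : nat) (B : R) : mat := fun p p' =>
  if Nat.eq_dec p p' then 0
  else if lt_dec p n then if lt_dec p' n then w p p' else B + 1 else B + 1.

Section Pad.

Variables (w : mat) (n : nat) (B : R).
Hypothesis B_ge0 : 0 <= B.
Hypothesis w_pos : forall p p', (p < n)%nat -> (p' < n)%nat -> p <> p' -> 0 < w p p'.
Hypothesis w_le : forall p p', (p < n)%nat -> (p' < n)%nat -> p <> p' -> w p p' <= B.
Hypothesis w_sym : forall p p', (p < n)%nat -> (p' < n)%nat -> w p p' = w p' p.
Hypothesis w_triangle : forall p p' p'', (p < n)%nat -> (p' < n)%nat -> (p'' < n)%nat ->
  p <> p' -> p <> p'' -> p' <> p'' -> w p p' <= w p p'' + w p'' p'.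

Lemma pad_inside p p' : p <> p' -> (p < n)%nat -> (p' < n)%nat -> pad w n B p p' = w p p'.
Proof.
  intros Hne Hp Hp'; unfold pad.
  destruct (Nat.eq_dec p p'), (lt_dec p n), (lt_dec p' n); tauto.
Qed.

Lemma pad_cases p p' : p <> p' ->
  ((p < n)%nat /\ (p' < n)%nat) \/ pad w n B p p' = B + 1.
Proof.
  intros Hne; unfold pad.
  destruct (Nat.eq_dec p p'), (lt_dec p n), (lt_dec p' n); tauto.
Qed.

Lemma pad_pos_le p p' : p <> p' -> 0 < pad w n B p p' <= B + 1.
Proof.
  intros Hne; destruct (pad_cases p p' Hne) as [[Hp Hp'] | ->]; [|lra].
  rewrite pad_inside by assumption.
  pose proof (w_pos p p' Hp Hp' Hne); pose proof (w_le p p' Hp Hp' Hne); lra.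
Qed.

Lemma pad_diag p : pad w n B p p = 0.
Proof. unfold pad; destruct (Nat.eq_dec p p); [reflexivity | congruence]. Qed.

Lemma pad_le p p' : pad w n B p p' <= B + 1.
Proof.
  destruct (Nat.eq_dec p p') as [->|Hne]; [rewrite pad_diag; lra|].
  apply (pad_pos_le p p' Hne).
Qed.

Lemma pad_nonneg p p' : 0 <= pad w n B p p'.
Proof.
  destruct (Nat.eq_dec p p') as [->|Hne]; [rewrite pad_diag; lra|].
  apply Rlt_le, (pad_pos_le p p' Hne).
Qed.

Lemma pad_proper : proper (pad w n B).
Proof. intros p p' Hne; apply (pad_pos_le p p' Hne). Qed.

Lemma pad_calR : in_calR (pad w n B).
Proof.
  repeat split.
  - exact pad_diag.
  - exact pad_nonneg.
  - intros p p'; unfold pad.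
    destruct (Nat.eq_dec p p'), (Nat.eq_dec p' p); try congruence.
    destruct (lt_dec p n), (lt_dec p' n); auto.
  - intros p p' p''.
    destruct (Nat.eq_dec p p') as [->|H1].
    { rewrite pad_diag; pose proof (pad_nonneg p' p''); pose proof (pad_nonneg p'' p'); lra. }
    destruct (Nat.eq_dec p p'') as [->|H2]; [rewrite pad_diag; lra|].
    destruct (Nat.eq_dec p'' p') as [->|H3]; [rewrite pad_diag; lra|].
    pose proof (pad_pos_le p p'' H2) as L1; pose proof (pad_pos_le p'' p' H3) as L2.
    pose proof (pad_le p p').
    destruct (pad_cases p p'' H2) as [[Hp Hp''] | E1]; [|lra].
    destruct (pad_cases p'' p' H3) as [[_ Hp'] | E2]; [|lra].
    rewrite !pad_inside by assumption.
    apply w_triangle; auto.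
Qed.

End Pad.

Definition glue (W : nat -> mat) (D : nat -> R) : mat := fun i j =>
  let (b, p) := Cantor.of_nat i in
  let (c, p') := Cantor.of_nat j in
  if Nat.eq_dec b c then W b p p' else Rmax (D b) (D c).

Section Glue.

Variables (W : nat -> mat) (D : nat -> R).
Hypothesis W_calR : forall b, in_calR (W b).
Hypothesis W_proper : forall b, proper (W b).
Hypothesis W_le : forall b p p', W b p p' <= D b.

Lemma glue_pair b p c p' :
  glue W D (Cantor.to_nat (b, p)) (Cantor.to_nat (c, p')) =
  if Nat.eq_dec b c then W b p p' else Rmax (D b) (D c).
Proof. unfold glue; rewrite !Cantor.cancel_of_to; reflexivity. Qed.

Lemma glue_pair_split i : exists b p, i = Cantor.to_nat (b, p).
Proof. exists (fst (Cantor.of_nat i)), (snd (Cantor.of_nat i)).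
  rewrite <- surjective_pairing, Cantor.cancel_to_of; reflexivity. Qed.

Lemma block_bound_pos b : 0 < D b.
Proof. pose proof (W_proper b 0%nat 1%nat ltac:(lia)); pose proof (W_le b 0%nat 1%nat); lra. Qed.

Lemma glue_calR : in_calR (glue W D).
Proof.
  assert (Hmax : forall b c, 0 < Rmax (D b) (D c)).
  { intros b c; pose proof (block_bound_pos b); pose proof (Rmax_l (D b) (D c)); lra. }
  repeat split.
  - intros i; destruct (glue_pair_split i) as [b [p ->]].
    rewrite glue_pair; destruct (Nat.eq_dec b b); [apply W_calR | congruence].
  - intros i j; destruct (glue_pair_split i) as [b [p ->]], (glue_pair_split j) as [c [p' ->]].
    rewrite glue_pair; destruct (Nat.eq_dec b c); [apply W_calR | left; apply Hmax].
  - intros i j; destruct (glue_pair_split i) as [b [p ->]], (glue_pair_split j) as [c [p' ->]].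
    rewrite !glue_pair; destruct (Nat.eq_dec b c), (Nat.eq_dec c b); subst; try congruence.
    + apply W_calR.
    + apply Rmax_comm.
  - intros i j k.
    destruct (glue_pair_split i) as [b [p ->]], (glue_pair_split j) as [c [p' ->]],
      (glue_pair_split k) as [e [p'' ->]].
    rewrite !glue_pair.
    destruct (Nat.eq_dec b c) as [Ebc|Hbc], (Nat.eq_dec b e) as [Ebe|Hbe],
      (Nat.eq_dec e c) as [Eec|Hec]; try congruence.
    + subst c e; apply W_calR.
    + subst c; pose proof (W_le b p p'); pose proof (Rmax_l (D b) (D e)).
      pose proof (Hmax e b); lra.
    + subst e; pose proof (proj1 (proj2 (W_calR b)) p p''); lra.
    + subst e; pose proof (proj1 (proj2 (W_calR c)) p'' p'); lra.
    + pose proof (Rmax_l (D b) (D e)); pose proof (Rmax_r (D e) (D c)).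
      pose proof (Hmax b e); pose proof (Hmax e c); apply Rmax_lub; lra.
Qed.

Lemma glue_proper : proper (glue W D).
Proof.
  intros i j Hij.
  destruct (glue_pair_split i) as [b [p ->]], (glue_pair_split j) as [c [p' ->]].
  rewrite glue_pair; destruct (Nat.eq_dec b c) as [<-|].
  - apply W_proper; congruence.
  - pose proof (block_bound_pos b); pose proof (Rmax_l (D b) (D c)); lra.
Qed.

Lemma glue_weakly_universal :
  (forall n q, in_calR_n n q -> forall eps, 0 < eps -> exists b,
     forall k s, (k < n)%nat -> (s < n)%nat -> Rabs (W b k s - q k s) < eps) ->
  weakly_universal (glue W D).
Proof.
  intros Hdense; split; [exact glue_calR | split; [exact glue_proper|]].
  intros n q Hq eps Heps; destruct (Hdense n q Hq eps Heps) as [b Hb].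
  exists (fun k => Cantor.to_nat (b, k)); split.
  - intros k s _ _ E; apply Cantor.to_nat_inj in E; congruence.
  - intros k s Hk Hs; rewrite glue_pair.
    destruct (Nat.eq_dec b b); [apply Hb; assumption | congruence].
Qed.

End Glue.

Lemma nat_bound_upto2 (f : nat -> nat -> nat) (n : nat) :
  exists N, forall p p', (p < n)%nat -> (p' < n)%nat -> (f p p' < N)%nat.
Proof.
  induction n as [|n [N HN]].
  - exists O; intros p p' Hp; lia.
  - destruct (nat_bound_upto (f n) (S n)) as [Nrow Hrow],
      (nat_bound_upto (fun p => f p n) (S n)) as [Ncol Hcol].
    exists (Nat.max N (Nat.max Nrow Ncol)); intros p p' Hp Hp'.
    destruct (Nat.eq_dec p n) as [->|Hpn]; [specialize (Hrow p' Hp'); lia|].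
    destruct (Nat.eq_dec p' n) as [->|Hpn']; [specialize (Hcol p Hp); lia|].
    specialize (HN p p' ltac:(lia) ltac:(lia)); lia.
Qed.

(* A code [(n, K, D, rows)] describes the distances [rows[p][p'] / (K + 1)]
   between [n] points, with integer numerators bounded by [D]. *)
Definition code : Type := (nat * nat * nat * list (list nat))%type.

Definition code_size (x : code) : nat := fst (fst (fst x)).
Definition code_scale (x : code) : nat := snd (fst (fst x)).
Definition code_bound (x : code) : nat := snd (fst x).
Definition code_entry (x : code) (p p' : nat) : nat := nth p' (nth p (snd x) nil) O.
Definition code_dist (x : code) : mat :=
  fun p p' => INR (code_entry x p p') / INR (S (code_scale x)).

Definition code_valid (x : code) : Prop :=
  (forall p p', (p < code_size x)%nat -> (p' < code_size x)%nat ->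
     code_entry x p p' = code_entry x p' p) /\
  (forall p p', (p < code_size x)%nat -> (p' < code_size x)%nat -> p <> p' ->
     (1 <= code_entry x p p' <= code_bound x)%nat) /\
  (forall p p' p'', (p < code_size x)%nat -> (p' < code_size x)%nat ->
     (p'' < code_size x)%nat -> p <> p' -> p <> p'' -> p' <> p'' ->
     (code_entry x p p' <= code_entry x p p'' + code_entry x p'' p')%nat).

Definition decode (c : nat) : code :=
  match (choice.unpickle c : option code) with Some x => x | None => (O, O, O, nil) end.

Lemma decode_pickle (x : code) : decode (choice.pickle x) = x.
Proof. unfold decode; rewrite choice.pickleK; reflexivity. Qed.

Definition valid_size (x : code) : nat :=
  if excluded_middle_informative (code_valid x) then code_size x else O.

Definition code_block (c : nat) : mat :=
  pad (code_dist (decode c)) (valid_size (decode c)) (INR (code_bound (decode c))).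

Definition code_block_bound (c : nat) : R := INR (code_bound (decode c)) + 1.

Definition rational_glue : mat := glue code_block code_block_bound.

Lemma valid_size_valid (x : code) (p : nat) :
  (p < valid_size x)%nat -> code_valid x /\ valid_size x = code_size x.
Proof.
  unfold valid_size; destruct (excluded_middle_informative (code_valid x)); [tauto | lia].
Qed.

Section CodeDist.

Variable x : code.

Let scale_ge1 : 1 <= INR (S (code_scale x)).
Proof. rewrite S_INR; pose proof (pos_INR (code_scale x)); lra. Qed.

Lemma code_dist_pos p p' : (p < valid_size x)%nat -> (p' < valid_size x)%nat -> p <> p' ->
  0 < code_dist x p p'.
Proof.
  intros Hp Hp' Hne; destruct (valid_size_valid x p Hp) as [[_ [V _]] E]; rewrite E in *.
  destruct (V p p' Hp Hp' Hne) as [V1 _]; apply le_INR in V1; simpl in V1.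
  unfold code_dist, Rdiv; apply Rmult_lt_0_compat; [lra | apply Rinv_0_lt_compat; lra].
Qed.

Lemma code_dist_le p p' : (p < valid_size x)%nat -> (p' < valid_size x)%nat -> p <> p' ->
  code_dist x p p' <= INR (code_bound x).
Proof.
  intros Hp Hp' Hne; destruct (valid_size_valid x p Hp) as [[_ [V _]] E]; rewrite E in *.
  destruct (V p p' Hp Hp' Hne) as [_ V2]; apply le_INR in V2.
  unfold code_dist; apply Rle_trans with (INR (code_entry x p p')); [|exact V2].
  pose proof (pos_INR (code_entry x p p')).
  apply Rmult_le_reg_r with (INR (S (code_scale x))); [lra|].
  unfold Rdiv; rewrite Rmult_assoc, Rinv_l by lra; nra.
Qed.

Lemma code_dist_sym p p' : (p < valid_size x)%nat -> (p' < valid_size x)%nat ->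
  code_dist x p p' = code_dist x p' p.
Proof.
  intros Hp Hp'; destruct (valid_size_valid x p Hp) as [[V _] E]; rewrite E in *.
  unfold code_dist; rewrite V by assumption; reflexivity.
Qed.

Lemma code_dist_triangle p p' p'' :
  (p < valid_size x)%nat -> (p' < valid_size x)%nat -> (p'' < valid_size x)%nat ->
  p <> p' -> p <> p'' -> p' <> p'' -> code_dist x p p' <= code_dist x p p'' + code_dist x p'' p'.
Proof.
  intros Hp Hp' Hp'' H1 H2 H3.
  destruct (valid_size_valid x p Hp) as [[_ [_ V]] E]; rewrite E in *.
  pose proof (le_INR _ _ (V p p' p'' Hp Hp' Hp'' H1 H2 H3)) as Vt; rewrite plus_INR in Vt.
  unfold code_dist, Rdiv; rewrite <- Rmult_plus_distr_r.
  apply Rmult_le_compat_r; [left; apply Rinv_0_lt_compat; lra | exact Vt].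
Qed.

End CodeDist.

Lemma code_block_calR (c : nat) : in_calR (code_block c).
Proof.
  apply pad_calR; [apply pos_INR | apply code_dist_pos | apply code_dist_le
                  | apply code_dist_sym | apply code_dist_triangle].
Qed.

Lemma code_block_proper (c : nat) : proper (code_block c).
Proof.
  apply pad_proper; [apply pos_INR | apply code_dist_pos | apply code_dist_le].
Qed.

Lemma code_block_le (c : nat) p p' : code_block c p p' <= code_block_bound c.
Proof.
  apply pad_le; [apply pos_INR | apply code_dist_pos | apply code_dist_le].
Qed.

Definition round_up (v : R) : nat := Z.to_nat (up v).

Lemma round_up_bounds (v : R) : 0 <= v -> v < INR (round_up v) <= v + 1.
Proof.
  intros Hv; destruct (archimed v) as [H1 H2].
  assert (H0 : (0 <= up v)%Z) by (apply le_IZR; lra).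
  unfold round_up; rewrite INR_IZR_INZ, Z2Nat.id by assumption; lra.
Qed.

Definition grid (c delta : R) (q : mat) (p p' : nat) : nat :=
  if Nat.eq_dec p p' then O else round_up ((q p p' + delta) * c).

Section Grid.

Variables (n : nat) (q : mat) (c delta : R).
Hypothesis q_calR : in_calR_n n q.
Hypothesis delta_pos : 0 < delta.
Hypothesis fine_scale : 1 < delta * c.

Let c_pos : 0 < c.
Proof. destruct (Rle_lt_dec c 0); [nra | assumption]. Qed.

Lemma grid_bounds p p' : (p < n)%nat -> (p' < n)%nat -> p <> p' ->
  (q p p' + delta) * c < INR (grid c delta q p p') <= (q p p' + delta) * c + 1.
Proof.
  intros Hp Hp' Hne; unfold grid; destruct (Nat.eq_dec p p'); [congruence|].
  apply round_up_bounds; pose proof (proj1 (proj2 q_calR) p p' Hp Hp'); nra.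
Qed.

Lemma grid_ge1 p p' : (p < n)%nat -> (p' < n)%nat -> p <> p' ->
  (1 <= grid c delta q p p')%nat.
Proof.
  intros Hp Hp' Hne; destruct (grid_bounds p p' Hp Hp' Hne) as [H _].
  pose proof (proj1 (proj2 q_calR) p p' Hp Hp').
  destruct (grid c delta q p p'); simpl in H; [nra | lia].
Qed.

Lemma grid_sym p p' : (p < n)%nat -> (p' < n)%nat -> grid c delta q p p' = grid c delta q p' p.
Proof.
  intros Hp Hp'; unfold grid.
  rewrite (proj1 (proj2 (proj2 q_calR)) p p' Hp Hp').
  destruct (Nat.eq_dec p p'), (Nat.eq_dec p' p); congruence.
Qed.

(* Rounding up adds at most [1 < delta * c] to the left-hand side, while the
   right-hand side carries the shift [delta * c] twice. *)
Lemma grid_triangle p p' p'' : (p < n)%nat -> (p' < n)%nat -> (p'' < n)%nat ->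
  p <> p' -> p <> p'' -> p' <> p'' ->
  (grid c delta q p p' <= grid c delta q p p'' + grid c delta q p'' p')%nat.
Proof.
  intros Hp Hp' Hp'' H1 H2 H3; apply INR_le; rewrite plus_INR.
  destruct (grid_bounds p p' Hp Hp' H1) as [_ B1].
  destruct (grid_bounds p p'' Hp Hp'' H2) as [B2 _].
  destruct (grid_bounds p'' p' Hp'' Hp' (not_eq_sym H3)) as [B3 _].
  pose proof (proj2 (proj2 (proj2 q_calR)) p p' p'' Hp Hp' Hp''); nra.
Qed.

Lemma grid_approx p p' : (p < n)%nat -> (p' < n)%nat -> p <> p' ->
  Rabs (INR (grid c delta q p p') / c - q p p') < 2 * delta.
Proof.
  intros Hp Hp' Hne; destruct (grid_bounds p p' Hp Hp' Hne) as [B1 B2].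
  assert (E : INR (grid c delta q p p') / c - q p p' =
              (INR (grid c delta q p p') - (q p p' + delta) * c) / c + delta)
    by (field; lra).
  assert (Hinv : / c < delta).
  { apply Rmult_lt_reg_r with c; [exact c_pos|]; rewrite Rinv_l by lra; lra. }
  rewrite E; apply Rabs_def1.
  - apply Rle_lt_trans with (/ c + delta); [|lra].
    apply Rplus_le_compat_r; unfold Rdiv; rewrite <- (Rmult_1_l (/ c)) at 2.
    apply Rmult_le_compat_r; [left; apply Rinv_0_lt_compat|]; lra.
  - assert (0 < (INR (grid c delta q p p') - (q p p' + delta) * c) / c).
    { apply Rdiv_lt_0_compat; lra. }
    lra.
Qed.

End Grid.

Definition grid_code (n K D : nat) (f : nat -> nat -> nat) : code :=
  (n, K, D, map (fun p => map (f p) (seq 0 n)) (seq 0 n)).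

Lemma nth_map_seq {A : Type} (F : nat -> A) (n p : nat) (d : A) :
  (p < n)%nat -> nth p (map F (seq 0 n)) d = F p.
Proof.
  intros Hp; rewrite nth_indep with (d' := F O) by (rewrite length_map, length_seq; lia).
  rewrite map_nth, seq_nth by lia; reflexivity.
Qed.

Lemma grid_code_entry n K D f p p' : (p < n)%nat -> (p' < n)%nat ->
  code_entry (grid_code n K D f) p p' = f p p'.
Proof.
  intros Hp Hp'; unfold code_entry, grid_code; simpl.
  rewrite !nth_map_seq by assumption; reflexivity.
Qed.

Lemma code_approx (n : nat) (q : mat) : in_calR_n n q -> forall eps, 0 < eps ->
  exists x, code_valid x /\ code_size x = n /\
    forall k s, (k < n)%nat -> (s < n)%nat -> k <> s -> Rabs (code_dist x k s - q k s) < eps.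
Proof.
  intros Hq eps Heps.
  set (delta := eps / 2).
  set (K := round_up (/ delta)).
  set (c := INR (S K)).
  assert (Hc : 1 < delta * c).
  { destruct (round_up_bounds (/ delta)) as [HK _].
    { left; apply Rinv_0_lt_compat; unfold delta; lra. }
    fold K in HK; unfold c; rewrite S_INR.
    apply Rmult_lt_compat_l with (r := delta) in HK; [|unfold delta; lra].
    rewrite Rinv_r in HK by (unfold delta; lra).
    unfold delta in *; lra. }
  destruct (nat_bound_upto2 (grid c delta q) n) as [D HD].
  exists (grid_code n K D (grid c delta q)); split; [split; [|split] | split; [reflexivity|]].
  - intros p p' Hp Hp'; rewrite !grid_code_entry by assumption.
    apply (grid_sym n); assumption.
  - intros p p' Hp Hp' Hne; rewrite grid_code_entry by assumption; split.
    + apply (grid_ge1 n q c delta); unfold delta in *; auto; lra.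
    + specialize (HD p p' Hp Hp'); unfold code_bound; simpl; lia.
  - intros p p' p'' Hp Hp' Hp'' H1 H2 H3; rewrite !grid_code_entry by assumption.
    apply (grid_triangle n); unfold delta in *; auto; lra.
  - intros k s Hk Hs Hne; unfold code_dist; rewrite grid_code_entry by assumption.
    replace eps with (2 * delta) by (unfold delta; field).
    apply (grid_approx n); unfold delta in *; auto; lra.
Qed.

Lemma rational_glue_weakly_universal : weakly_universal rational_glue.
Proof.
  apply glue_weakly_universal;
    [exact code_block_calR | exact code_block_proper | exact code_block_le|].
  intros n q Hq eps Heps; destruct (code_approx n q Hq eps Heps) as [x [Hv [Hn Hx]]].
  exists (choice.pickle x); intros k s Hk Hs.
  unfold code_block; rewrite decode_pickle.
  assert (Hsize : valid_size x = n).
  { unfold valid_size; destruct (excluded_middle_informative (code_valid x)); tauto. }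
  destruct (Nat.eq_dec k s) as [<-|Hne].
  - rewrite pad_diag, (proj1 Hq k Hk), Rminus_0_r, Rabs_R0; exact Heps.
  - rewrite pad_inside by (rewrite ?Hsize; assumption); apply Hx; assumption.
Qed.

Theorem lemma5 :
  (forall r : mat, universal r -> weakly_universal r) /\
  (exists r : mat, weakly_universal r /\ ~ universal r).
Proof.
  split.
  - exact universal_weakly_universal.
  - exists (prepend_point rational_glue); split.
    + exact (prepend_point_weakly_universal _ rational_glue_weakly_universal).
    + exact (prepend_point_not_universal _ (proj1 rational_glue_weakly_universal)).
Qed.
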